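(* For every model class $\mathcal M\subseteq\mathcal M^+$, every $\bar M\in\mathcal M^+$ and every $\varepsilon>0$, $$\mathrm{dec}^{\mathrm c}_{\mathrm{pac},\varepsilon}(\mathcal M\cup\{\bar M\},\bar M)\le\mathrm{dec}^{\mathrm c}_{\mathrm{pac},\sqrt3\varepsilon}(\mathcal M,\bar M)+4\varepsilon.$$
   Context: Models are kernels $M:\Pi\to\Delta([0,1]\times\mathcal O)$ (rewards in $[0,1]$); $\mathcal M^+$ is the set of all models. $f^M(\pi)=\mathbb E_{(r,o)\sim M(\pi)}[r]$, $\pi_M\in\arg\max f^M$, $g^M(\pi)=f^M(\pi_M)-f^M(\pi)$; $D^2_H$ is squared Hellinger distance. Constrained PAC DEC: $\mathrm{dec}^{\mathrm c}_{\mathrm{pac},\varepsilon}(\mathcal M',\bar M)=\inf_{p,q\in\Delta(\Pi)}\sup_{M\in\mathcal M'}\{\mathbb E_{\pi\sim p}[g^M(\pi)]:\mathbb E_{\pi\sim q}[D^2_H(M(\pi),\bar M(\pi))]\le\varepsilon^2\}$ (value $0$ if no $M$ satisfies the constraint). *)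

From HB Require Import structures.
From mathcomp Require Import all_boot all_order all_algebra.
From mathcomp Require Import all_classical all_reals all_analysis.
Set Implicit Arguments. Unset Strict Implicit. Unset Printing Implicit Defensive.
Import Order.TTheory GRing.Theory Num.Theory.
Local Open Scope classical_set_scope.
Local Open Scope ring_scope.
Local Open Scope ereal_scope.

(* Squared Hellinger distance between two probability measures P, Q on a
   measurable space Z (convention without the factor 1/2):
     D_H^2(P,Q) = \int (sqrt (dP/dnu) - sqrt (dQ/dnu))^2 dnu
   for any measure nu dominating P and Q with densities p, q.  The value does
   not depend on the choice of (nu,p,q); we take the infimum over all choices. *)
Definition hellinger2 {d} {Z : measurableType d} {R : realType}
  (P Q : {measure set Z -> \bar R}) : \bar R :=
  ereal_inf [set v | exists (nu : {measure set Z -> \bar R}) (p q : Z -> R),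
    [/\ measurable_fun setT p /\ measurable_fun setT q,
        (forall z, 0 <= p z)%R /\ (forall z, 0 <= q z)%R,
        (forall A, measurable A -> P A = \int[nu]_(z in A) (p z)%:E),
        (forall A, measurable A -> Q A = \int[nu]_(z in A) (q z)%:E) &
        v = \int[nu]_z ((Num.sqrt (p z) - Num.sqrt (q z)) ^+ 2)%:E]].

Section Models.
Context {R : realType} {dP dO : measure_display}
  {Pi : measurableType dP} {O : measurableType dO}.

(* A model: a probability kernel from decisions to (reward, observation). *)
Definition model := R.-pker Pi ~> (R * O)%type.

(* The class M^+ of all models: rewards lie in [0,1] almost surely. *)
Definition is_model (M : model) : Prop :=
  forall pi, M pi (`[0%R, 1%R] `*` setT) = 1.

Definition fM (M : model) (pi : Pi) : \bar R :=
  \int[M pi]_z (z.1)%:E.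

Definition gM (M : model) (pi : Pi) : \bar R :=
  ereal_sup (range (fM M)) - fM M pi.

Definition dec_inner (Mc : set model) (Mbar : model) (eps : R)
  (p q : probability Pi R) : \bar R :=
  let S := [set v | exists2 M, Mc M &
              (\int[q]_pi hellinger2 (M pi) (Mbar pi) <= (eps ^+ 2)%:E) /\
              v = \int[p]_pi gM M pi] in
  if pselect (S = set0) then 0 else ereal_sup S.

Definition dec_c_pac (eps : R) (Mc : set model) (Mbar : model) : \bar R :=
  ereal_inf [set v | exists p q : probability Pi R, v = dec_inner Mc Mbar eps p q].

End Models.

(* Fix (p, q), an action a that is (eps/2)-optimal for Mbar, and the mixture
   q' = (q + p + delta_a)/3.  Since rewards lie in [0,1], the squared gap
   between mean rewards is bounded by the squared Hellinger distance, and
   integrating against q' controls it both at a and on average under p.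
   If some M0 in Mc is eps-close to Mbar under q', play (p, q'): models of Mc
   feasible for q' are (sqrt 3 eps)-feasible for q because q <= 3 q', while the
   regret of Mbar exceeds that of M0 by at most 4 eps by AM-GM.  Otherwise only
   Mbar is feasible, and playing delta_a costs g^Mbar(a) <= eps/2. *)

From HB Require Import structures.
From mathcomp Require Import all_boot all_order all_algebra.
From mathcomp Require Import ring lra.
From mathcomp Require Import all_classical all_reals all_analysis.
From mathcomp Require Import measurable_realfun.
Set Implicit Arguments. Unset Strict Implicit. Unset Printing Implicit Defensive.
Import Order.TTheory GRing.Theory Num.Theory.
Local Open Scope classical_set_scope.
Local Open Scope ring_scope.

Section real_inequalities.
Context (R : realType).

Lemma centered_weight_diff_le (w u v t : R) : 0 <= w <= 1 -> 0 <= u -> 0 <= v ->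
  0 < t -> (w - 2^-1) * (u - v) <=
  t / 2 * (Num.sqrt u - Num.sqrt v) ^+ 2 + (u + v) / (4 * t).
Proof.
move=> /andP[w0 w1] u0 v0 t0.
suff key x y : 0 <= x -> 0 <= y -> (w - 2^-1) * (x ^+ 2 - y ^+ 2) <=
    t / 2 * (x - y) ^+ 2 + (x ^+ 2 + y ^+ 2) / (4 * t).
  by have := key _ _ (sqrtr_ge0 u) (sqrtr_ge0 v); rewrite !sqr_sqrtr.
move=> x0 y0; rewrite -(ler_pM2l t0).
have -> : t * (t / 2 * (x - y) ^+ 2 + (x ^+ 2 + y ^+ 2) / (4 * t)) =
          t * (t / 2 * (x - y) ^+ 2) + (x ^+ 2 + y ^+ 2) / 4.
  by field; rewrite gt_eqF.
(* Complete the square in [t * (x - y)]; the remainder is nonnegative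
   because [|w - 1/2| <= 1/2]. *)
have square : 0 <= (t * (x - y) - (w - 2^-1) * (x + y)) ^+ 2 by exact: sqr_ge0.
have remainder : 0 <= (x + y) ^+ 2 * (1 - 4 * (w - 2^-1) ^+ 2).
  by apply: mulr_ge0; [exact: sqr_ge0|nra].
have := sqr_ge0 (x - y); nra.
Qed.

Lemma sqr_le_of_forall_bound (x d : R) : 0 <= d ->
  (forall t, 0 < t -> `|x| <= t / 2 * d + (2 * t)^-1) -> x ^+ 2 <= d.
Proof.
move=> d0 xd; apply/ler_addgt0Pr => e e0.
have de0 : 0 < d + e by lra.
set s := Num.sqrt (d + e).
have s0 : 0 < s by rewrite sqrtr_gt0.
have ss : s ^+ 2 = d + e by rewrite sqr_sqrtr// ltW.
have xs : `|x| <= s.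
  have si0 : 0 < s^-1 by rewrite invr_gt0.
  apply: (le_trans (xd _ si0)).
  have -> : s^-1 / 2 * d + (2 * s^-1)^-1 = (d / s ^+ 2 + 1) * s / 2.
    by field; rewrite gt_eqF.
  have : d / s ^+ 2 <= 1 by rewrite ler_pdivrMr ?exprn_gt0// mul1r; lra.
  nra.
by rewrite -ss -real_normK ?num_real// lerXn2r// ?nnegrE// ltW.
Qed.

Lemma le_sqr_div_add (x e : R) : 0 < e -> x <= x ^+ 2 / (4 * e) + e.
Proof.
move=> e0; rewrite -subr_ge0.
have -> : x ^+ 2 / (4 * e) + e - x = (x - 2 * e) ^+ 2 / (4 * e) by field; rewrite gt_eqF.
by rewrite divr_ge0 ?sqr_ge0// ltW// mulr_gt0.
Qed.

Lemma regret_transfer (e s s' r r' ra ra' : R) : 0 < e ->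
  s <= ra + e / 2 -> ra' <= s' ->
  s - r <= s' - r' +
           ((4 * e)^-1 * (ra' - ra) ^+ 2 + 5 / 2 * e + (4 * e)^-1 * (r' - r) ^+ 2).
Proof.
move=> e0 sra ras; have := le_sqr_div_add (ra - ra') e0; have := le_sqr_div_add (r' - r) e0.
by rewrite -sqrrN opprB ![(4 * e)^-1 * _]mulrC; lra.
Qed.

End real_inequalities.

Local Open Scope ereal_scope.

Section ge0_integral.
Context d (T : measurableType d) (R : realType).
Variable mu : {measure set T -> \bar R}.
Import HBNNSimple.

Lemma le_ge0_integral (f g : T -> \bar R) :
  (forall x, 0 <= f x) -> (forall x, f x <= g x) ->
  \int[mu]_x f x <= \int[mu]_x g x.
Proof.
move=> f0 fg; have g0 x : 0 <= g x by exact: le_trans (f0 x) (fg x).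
rewrite !ge0_integralTE//; apply: le_ereal_sup => _ [h hf <-].
by exists h => // x; exact: le_trans (hf x) (fg x).
Qed.

Lemma ge0_integralD_EFin (f g : T -> R) :
  measurable_fun setT f -> measurable_fun setT g ->
  (forall x, 0 <= f x)%R -> (forall x, 0 <= g x)%R ->
  \int[mu]_x (f x + g x)%:E = \int[mu]_x (f x)%:E + \int[mu]_x (g x)%:E.
Proof.
move=> mf mg f0 g0; under eq_integral do rewrite EFinD.
by apply: ge0_integralD => // [x _||x _|]; rewrite ?lee_fin//;
  exact/measurable_EFinP.
Qed.

Lemma ge0_integralZl_EFinM (c : R) (f : T -> R) :
  (0 <= c)%R -> measurable_fun setT f -> (forall x, 0 <= f x)%R ->
  \int[mu]_x (c * f x)%:E = c%:E * \int[mu]_x (f x)%:E.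
Proof.
move=> c0 mf f0; under eq_integral do rewrite EFinM.
by apply: ge0_integralZl_EFin => // [x _|]; rewrite ?lee_fin//; exact/measurable_EFinP.
Qed.

Lemma cvg_integral_nondecreasing (g : (T -> \bar R)^nat) (f : T -> \bar R) :
  (forall n, measurable_fun setT (g n)) -> (forall n x, 0 <= g n x) ->
  (forall x, nondecreasing_seq (g^~ x)) -> (forall x, g^~ x @ \oo --> f x) ->
  \int[mu]_x g n x @[n --> \oo] --> \int[mu]_x f x.
Proof.
move=> mg g0 nd_g gf.
rewrite (eq_integral (fun x => limn (g^~ x))) => [|x _]; last exact/esym/cvg_lim.
exact: cvg_monotone_convergence.
Qed.

End ge0_integral.

Section density.
Context d (T : measurableType d) (R : realType).
Variables (P nu : {measure set T -> \bar R}) (p : T -> R).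
Hypotheses (mp : measurable_fun setT p) (p0 : forall x, (0 <= p x)%R).
Hypothesis Pp : forall A, measurable A -> P A = \int[nu]_(x in A) (p x)%:E.
Import HBNNSimple.

Let mpE : measurable_fun setT (fun x => (p x)%:E).
Proof. exact/measurable_EFinP. Qed.

Lemma integral_density_nnsfun (h : {nnsfun T >-> R}) :
  \int[P]_x (h x)%:E = \int[nu]_x ((h x)%:E * (p x)%:E).
Proof.
have mh y : measurable (h @^-1` [set y]) by exact: measurable_sfunP.
rewrite integralT_nnsfun sintegralE.
have hE x : (h x)%:E = \sum_(y \in range h) (y * \1_(h @^-1` [set y]) x)%:E.
  by rewrite fsumEFin// -fimfunE.
under eq_integral => x _.
  rewrite hE ge0_mule_fsuml => [|y]; last exact: nnfun_muleindic_ge0.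
  over.
rewrite ge0_integral_fsum//; last 2 first.
- move=> y; apply: emeasurable_funM => //.
  by apply/measurable_EFinP; apply: measurable_funM => //; exact: measurable_indic.
- move=> y x; rewrite mule_ge0// lee_fin// -lee_fin; exact: nnfun_muleindic_ge0.
apply: eq_fsbigr => y /[!inE] -[x _ <-{y}].
under eq_integral do rewrite EFinM -muleA.
rewrite ge0_integralZl//; last 3 first.
- by apply: emeasurable_funM => //; exact/measurable_EFinP/measurable_indic.
- by move=> z _; rewrite mule_ge0// lee_fin.
- by rewrite lee_fin.
congr (_ * _); rewrite Pp// integral_mkcond; apply: eq_integral => z _.
by rewrite /patch indicE; case: (_ \in _); rewrite ?mul1e ?mul0e.
Qed.

Lemma integral_density (f : T -> \bar R) : (forall x, 0 <= f x) ->
  measurable_fun setT f -> \int[P]_x f x = \int[nu]_x (f x * (p x)%:E).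
Proof.
move=> f0 mf; pose h := nnsfun_approx measurableT mf.
have hf x : EFin \o h^~ x @ \oo --> f x by exact: cvg_nnsfun_approx.
have nd_h x : nondecreasing_seq (fun n => (h n x)%:E).
  by move=> m n mn; rewrite lee_fin; exact/lefP/nd_nnsfun_approx.
have mh n : measurable_fun setT (fun x => (h n x)%:E) by exact/measurable_EFinP.
have h0 n x : 0 <= (h n x)%:E by rewrite lee_fin.
have cP := cvg_integral_nondecreasing (mu := P) mh h0 nd_h hf.
have cnu : \int[nu]_x ((h n x)%:E * (p x)%:E) @[n --> \oo] -->
           \int[nu]_x (f x * (p x)%:E).
  apply: cvg_integral_nondecreasing => [n|n x|x|x].
  - exact: emeasurable_funM.
  - by rewrite mule_ge0// lee_fin.
  - by move=> m n mn; rewrite lee_wpmul2r ?lee_fin//; exact: nd_h.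
  - by apply: cvgeZr => //; exact: hf.
apply: (cvg_unique _ cP) => //.
suff -> : (fun n => \int[P]_x (h n x)%:E) =
          (fun n => \int[nu]_x ((h n x)%:E * (p x)%:E)) by [].
by apply/funext => n; exact: integral_density_nnsfun.
Qed.

End density.

Section unit_integral.
Context d (T : measurableType d) (R : realType).
Variables (P : {measure set T -> \bar R}) (g : T -> R).
Hypotheses (P1 : P setT = 1) (g01 : forall x, (0 <= g x <= 1)%R).

Lemma integral_unit_bounded : 0 <= \int[P]_x (g x)%:E <= 1.
Proof.
have g0 x : 0 <= (g x)%:E by rewrite lee_fin; case/andP: (g01 x).
rewrite integral_ge0//=; apply: le_trans (_ : \int[P]_x (cst 1 x) <= 1).
  by apply: le_ge0_integral => // x; rewrite lee_fin; case/andP: (g01 x).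
by rewrite integral_cst// P1 mul1e.
Qed.

Lemma fineK_integral_unit_bounded :
  (fine (\int[P]_x (g x)%:E))%:E = \int[P]_x (g x)%:E.
Proof.
have /andP[I0 I1] := integral_unit_bounded.
by rewrite fineK// ge0_fin_numE// (le_lt_trans I1)// ltey.
Qed.

End unit_integral.

Lemma probability_inhabited d (T : measurableType d) (R : realType)
  (P : probability T R) : inhabited T.
Proof.
apply: contrapT => noT.
have T0 : [set: T] = set0 by apply/seteqP; split=> // t; case: noT; exact: inhabits.
by have := probability_setT P; rewrite T0 measure0 => /esym/eqP; rewrite onee_eq0.
Qed.

Section mixture.
Context d (T : measurableType d) (R : realType).
Variables P1 P2 P3 : probability T R.

Definition mix3 := mscale ((3^-1 : R)%:nng)%R (measure_add (measure_add P1 P2) P3).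
HB.instance Definition _ := Measure.on mix3.

Lemma mix3_setT : mix3 setT = 1.
Proof.
(* [rewrite] does not see through the measure instances of [measure_add]. *)
have add2 : measure_add P1 P2 setT = 2%:E.
  apply: (eq_trans (measure_addE _ _ _)).
  apply: (eq_trans (f_equal2 (fun x y => x + y) (probability_setT P1) (probability_setT P2))).
  by [].
have add3 : measure_add (measure_add P1 P2) P3 setT = 3%:E.
  apply: (eq_trans (measure_addE _ _ _)).
  apply: (eq_trans (f_equal2 (fun x y => x + y) add2 (probability_setT P3))).
  by rewrite -[1]/(1%R%:E) -EFinD natr1.
rewrite /mix3 /mscale; apply: (eq_trans (f_equal (fun x => _ * x) add3)).
by rewrite -EFinM mulVf ?pnatr_eq0.
Qed.

HB.instance Definition _ := Measure_isProbability.Build _ _ _ mix3 mix3_setT.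

Lemma ge0_integral_mix3 (f : T -> \bar R) : (forall x, 0 <= f x) ->
  measurable_fun setT f ->
  \int[mix3]_x f x = (3^-1)%:E * (\int[P1]_x f x + \int[P2]_x f x + \int[P3]_x f x).
Proof.
by move=> f0 mf; rewrite ge0_integral_mscale// !ge0_integral_measure_add.
Qed.

Import HBNNSimple.

Lemma integral_le_mix3 (h : T -> \bar R) : (forall x, 0 <= h x) ->
  \int[P1]_x h x <= 3%:E * \int[mix3]_x h x.
Proof.
move=> h0; rewrite [leLHS]ge0_integralTE//; apply: ge_ereal_sup => _ [g gh <-].
rewrite -integralT_nnsfun.
have g0 x : 0 <= (g x)%:E by rewrite lee_fin.
have mg : measurable_fun setT (fun x => (g x)%:E) by exact/measurable_EFinP.
apply: (@le_trans _ _ (3%:E * \int[mix3]_x (g x)%:E)); last first.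
  by apply: lee_wpmul2l => //; exact: le_ge0_integral.
rewrite ge0_integral_mix3// muleA -EFinM mulfV ?pnatr_eq0// mul1e -addeA leeDl//.
by apply: adde_ge0; exact: integral_ge0.
Qed.

End mixture.

Section hellinger.
Context d (Z : measurableType d) (R : realType).
Variable f : Z -> R.
Hypotheses (mf : measurable_fun setT f) (f01 : forall z, (0 <= f z <= 1)%R).

Let msqrt (u : Z -> R) : measurable_fun setT u ->
  measurable_fun setT (fun z => Num.sqrt (u z)).
Proof.
by move=> mu; exact: measurableT_comp (continuous_measurable_fun (@sqrt_continuous R)) mu.
Qed.

Lemma integral_diff_le_sqrt_diff (nu : {measure set Z -> \bar R}) (u v : Z -> R)
    (a b s : R) :
  measurable_fun setT u -> measurable_fun setT v ->
  (forall z, 0 <= u z)%R -> (forall z, 0 <= v z)%R ->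
  \int[nu]_z (u z)%:E = 1 -> \int[nu]_z (v z)%:E = 1 ->
  \int[nu]_z (f z * u z)%:E = a%:E -> \int[nu]_z (f z * v z)%:E = b%:E ->
  \int[nu]_z ((Num.sqrt (u z) - Num.sqrt (v z)) ^+ 2)%:E = s%:E ->
  forall t, (0 < t)%R -> (a - b <= t / 2 * s + (2 * t)^-1)%R.
Proof.
move=> mu mv u0 v0 U1 V1 Ua Vb Us t t0.
have f0 z : (0 <= f z)%R by case/andP: (f01 z).
have ms : measurable_fun setT (fun z => (Num.sqrt (u z) - Num.sqrt (v z)) ^+ 2)%R.
  by apply: measurable_funX; apply: measurable_funB; exact: msqrt.
have muv : measurable_fun setT (fun z => u z + v z)%R by exact: measurable_funD.
have t2 : (0 <= t / 2)%R by rewrite divr_ge0// ltW.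
have t4 : (0 <= (4 * t)^-1)%R by rewrite invr_ge0 mulr_ge0// ltW.
have fuv0 z : (0 <= f z * u z)%R /\ (0 <= f z * v z)%R by split; exact: mulr_ge0.
(* [centered_weight_diff_le] with [v/2] and [u/2] moved across, so that both
   integrands are nonnegative. *)
have shifted_le : \int[nu]_z (f z * u z + 2^-1 * v z)%:E <=
    \int[nu]_z (f z * v z + 2^-1 * u z +
      (t / 2 * (Num.sqrt (u z) - Num.sqrt (v z)) ^+ 2 + (4 * t)^-1 * (u z + v z)))%:E.
  apply: le_ge0_integral => z; rewrite lee_fin.
    by apply: addr_ge0; [exact: (fuv0 z).1|exact: mulr_ge0].
  have := centered_weight_diff_le (f01 z) (u0 z) (v0 z) t0.
  by rewrite [((u z + v z) / _)%R]mulrC !(mulrBl, mulrBr); lra.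
have lhsE : \int[nu]_z (f z * u z + 2^-1 * v z)%:E = (a + 2^-1)%:E.
  rewrite ge0_integralD_EFin ?ge0_integralZl_EFinM ?Ua ?V1 ?mule1//;
    by [apply: measurable_funM | move=> z; apply: mulr_ge0].
have rhsE : \int[nu]_z (f z * v z + 2^-1 * u z +
      (t / 2 * (Num.sqrt (u z) - Num.sqrt (v z)) ^+ 2 + (4 * t)^-1 * (u z + v z)))%:E
    = (b + 2^-1 + (t / 2 * s + (4 * t)^-1 * 2))%:E.
  rewrite !ge0_integralD_EFin ?ge0_integralZl_EFinM ?ge0_integralD_EFin
      ?Vb ?U1 ?V1 ?Us ?mule1//;
    first [ by apply: measurable_funD; apply: measurable_funM
          | by apply: measurable_funM
          | by move=> z; repeat (assumption || exact: sqr_ge0 ||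
                                  apply: addr_ge0 || apply: mulr_ge0) ].
rewrite lhsE rhsE lee_fin in shifted_le.
have -> : ((2 * t)^-1 = (4 * t)^-1 * 2)%R by field; rewrite gt_eqF.
lra.
Qed.

Lemma sqr_diff_le_hellinger2 (P Q : {measure set Z -> \bar R}) (a b : R) :
  P setT = 1 -> Q setT = 1 ->
  \int[P]_z (f z)%:E = a%:E -> \int[Q]_z (f z)%:E = b%:E ->
  ((a - b) ^+ 2)%:E <= hellinger2 P Q.
Proof.
move=> P1 Q1 Pa Qb.
apply/ereal_infP => _ [nu [u [v [[mu mv] [u0 v0] Pu Qv ->]]]].
set S := \int[nu]_z _.
have S0 : 0 <= S by apply: integral_ge0 => z _; rewrite lee_fin sqr_ge0.
have [->|Snoo] := eqVneq S +oo; first exact: leey.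
have Ss : S = (fine S)%:E by rewrite fineK// ge0_fin_numE// ltey.
have Ss' : \int[nu]_z ((Num.sqrt (v z) - Num.sqrt (u z)) ^+ 2)%:E = (fine S)%:E.
  by rewrite -Ss; apply: eq_integral => z _; rewrite -sqrrN opprB.
have f0 z : 0 <= (f z)%:E by rewrite lee_fin; case/andP: (f01 z).
have mfE : measurable_fun setT (fun z => (f z)%:E) by exact/measurable_EFinP.
have Ua : \int[nu]_z (f z * u z)%:E = a%:E.
  by rewrite -Pa (integral_density mu u0 Pu f0 mfE); under eq_integral do rewrite EFinM.
have Vb : \int[nu]_z (f z * v z)%:E = b%:E.
  by rewrite -Qb (integral_density mv v0 Qv f0 mfE); under eq_integral do rewrite EFinM.
have U1 : \int[nu]_z (u z)%:E = 1 by rewrite -Pu.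
have V1 : \int[nu]_z (v z)%:E = 1 by rewrite -Qv.
rewrite Ss lee_fin; apply: sqr_le_of_forall_bound; first by rewrite -lee_fin -Ss.
move=> t t0; rewrite ler_norml; apply/andP; split.
  rewrite lerNl opprB.
  exact: (integral_diff_le_sqrt_diff mv mu v0 u0 V1 U1 Vb Ua Ss').
exact: (integral_diff_le_sqrt_diff mu mv u0 v0 U1 V1 Ua Vb Ss).
Qed.

End hellinger.

Lemma hellinger2_ge0 d (Z : measurableType d) (R : realType)
  (P Q : {measure set Z -> \bar R}) : 0 <= hellinger2 P Q.
Proof.
apply/ereal_infP => _ [nu [p [q [_ _ _ _ ->]]]].
by apply: integral_ge0 => z _; rewrite lee_fin sqr_ge0.
Qed.

Definition unit_rewards {R : realType} {O : Type} : set (R * O) := `[0%R, 1%R] `*` setT.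

(* Unlike [z.1], this reward is bounded; models put no mass outside
   [unit_rewards], so clipping does not change [fM] ([fM_mean_reward]). *)
Definition clip_reward {R : realType} {O : Type} (z : R * O) : R :=
  z.1 * \1_unit_rewards z.

Section clip_reward.
Context (R : realType) (dO : measure_display) (O : measurableType dO).

Lemma measurable_unit_rewards : measurable (@unit_rewards R O).
Proof. exact: measurableX. Qed.

Lemma measurable_clip_reward : measurable_fun setT (@clip_reward R O).
Proof.
apply: measurable_funM; first exact: measurable_fst.
exact: measurable_indic measurable_unit_rewards.
Qed.

Lemma clip_reward01 (z : R * O) : (0 <= clip_reward z <= 1)%R.
Proof.
rewrite /clip_reward indicE; case: (boolP (z \in unit_rewards)) => [|_].
  rewrite inE => -[/= + _]; rewrite in_itv /= => /andP[z0 z1].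
  by rewrite mulr1 z0 z1.
by rewrite mulr0 lexx ler01.
Qed.

End clip_reward.

Section models.
Context {R : realType} {dP dO : measure_display}
  {Pi : measurableType dP} {O : measurableType dO}.
Local Notation model := (@model R dP dO Pi O).
Implicit Types (M : model) (pi : Pi).

Definition mean_reward M pi : R := fine (\int[M pi]_z (clip_reward z)%:E).

Lemma mean_rewardE M pi : (mean_reward M pi)%:E = \int[M pi]_z (clip_reward z)%:E.
Proof. exact/fineK_integral_unit_bounded/clip_reward01/prob_kernel. Qed.

Lemma mean_reward01 M pi : (0 <= mean_reward M pi <= 1)%R.
Proof.
by rewrite -!lee_fin mean_rewardE; apply/integral_unit_bounded/clip_reward01/prob_kernel.
Qed.

Lemma measurable_mean_reward M : measurable_fun setT (mean_reward M).
Proof.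
apply: measurableT_comp (fine_measurable measurableT) _.
apply: (measurable_fun_integral_kernel (l := M)); first exact: measurable_kernel.
- by move=> z; rewrite lee_fin; case/andP: (clip_reward01 z).
- by apply/measurable_EFinP; exact: measurable_clip_reward.
Qed.

Lemma fM_mean_reward M : is_model M -> forall pi, fM M pi = (mean_reward M pi)%:E.
Proof.
move=> HM pi; rewrite mean_rewardE /fM.
have mS := @measurable_unit_rewards R _ O.
have null : M pi (~` unit_rewards) = 0.
  have E : 1 = 1 + M pi (~` unit_rewards).
    apply: (eq_trans (esym (prob_kernel (s := M) pi))).
    rewrite -(setUCr unit_rewards) measureU ?setICr//; last exact: measurableC.
    by congr (_ + _); exact: HM.
  by rewrite -(addeK (x := 1) (M pi _))// (addeC (M pi _)) -E subee.
apply: ae_eq_integral => //.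
- by apply/measurable_EFinP; exact: measurable_fst.
- by apply/measurable_EFinP; exact: measurable_clip_reward.
exists (~` unit_rewards); split => //; first exact: measurableC.
by move=> z /= nz zS; apply: nz => _; rewrite /clip_reward indicE mem_set// mulr1.
Qed.

Definition opt_reward M : R := fine (ereal_sup (range (fM M))).

Section opt_reward.
Variables (M : model) (HM : is_model M).

Lemma ereal_sup_fM pi0 : ereal_sup (range (fM M)) = (opt_reward M)%:E.
Proof.
have ub : ereal_sup (range (fM M)) <= 1.
  apply: ge_ereal_sup => _ [pi _ <-].
  by rewrite fM_mean_reward// lee_fin; case/andP: (mean_reward01 M pi).
have lb : 0 <= ereal_sup (range (fM M)).
  apply: le_trans (ereal_sup_ubound (ex_intro2 _ _ pi0 I erefl)).
  by rewrite fM_mean_reward// lee_fin; case/andP: (mean_reward01 M pi0).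
by rewrite /opt_reward fineK// ge0_fin_numE// (le_lt_trans ub)// ltey.
Qed.

Lemma mean_reward_le_opt pi : (mean_reward M pi <= opt_reward M)%R.
Proof.
by rewrite -lee_fin -(ereal_sup_fM pi) -fM_mean_reward//; apply: ereal_sup_ubound; exists pi.
Qed.

Lemma gME pi : gM M pi = (opt_reward M - mean_reward M pi)%:E.
Proof. by rewrite /gM (ereal_sup_fM pi) fM_mean_reward. Qed.

Lemma exists_near_optimal pi0 (e : R) : (0 < e)%R ->
  exists a, (opt_reward M <= mean_reward M a + e)%R.
Proof.
move=> e0; have : (opt_reward M - e)%:E < ereal_sup (range (fM M)).
  by rewrite (ereal_sup_fM pi0) lte_fin gtrBl.
move=> /ereal_sup_gt[_ [a _ <-]]; rewrite fM_mean_reward// lte_fin => Ha.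
by exists a; rewrite -lerBlDr ltW.
Qed.

End opt_reward.

Lemma sqr_mean_reward_diff_le_hellinger2 M M' pi :
  ((mean_reward M pi - mean_reward M' pi) ^+ 2)%:E <= hellinger2 (M pi) (M' pi).
Proof.
apply: sqr_diff_le_hellinger2; rewrite ?prob_kernel ?mean_rewardE //.
- exact: measurable_clip_reward.
- exact: clip_reward01.
Qed.

End models.

Section comparison.
Context {R : realType} {dP dO : measure_display}
  {Pi : measurableType dP} {O : measurableType dO}.
Local Notation model := (@model R dP dO Pi O).
Variables (Mbar M0 : model) (HMbar : is_model Mbar) (HM0 : is_model M0).
Variables (eps : R) (eps0 : (0 < eps)%R) (p : probability Pi R) (a : Pi).
Hypothesis Ha : (opt_reward Mbar <= mean_reward Mbar a + eps / 2)%R.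

Let D pi := (mean_reward M0 pi - mean_reward Mbar pi)%R.

Let D2_01 pi : (0 <= D pi ^+ 2 <= 1)%R.
Proof.
rewrite sqr_ge0/=; have := mean_reward01 M0 pi; have := mean_reward01 Mbar pi.
by rewrite /D; nra.
Qed.

Lemma integral_gM_le_of_sqr_bounds :
  (D a ^+ 2 <= 3 * eps ^+ 2)%R ->
  \int[p]_pi (D pi ^+ 2)%:E <= (3 * eps ^+ 2)%:E ->
  \int[p]_pi gM Mbar pi <= \int[p]_pi gM M0 pi + (4 * eps)%:E.
Proof.
move=> Da Dp; have c0 : (0 <= (4 * eps)^-1)%R by rewrite invr_ge0 mulr_ge0// ltW.
rewrite -(fineK_integral_unit_bounded (probability_setT p) D2_01) lee_fin in Dp.
set Ep := fine _ in Dp.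
set K := ((4 * eps)^-1 * D a ^+ 2 + 5 / 2 * eps)%R.
have K0 : (0 <= K)%R by apply: addr_ge0; apply: mulr_ge0; rewrite ?sqr_ge0// ltW.
have K_le : (K + (4 * eps)^-1 * Ep <= 4 * eps)%R.
  have : ((4 * eps)^-1 * D a ^+ 2 <= 3 / 4 * eps)%R.
    by rewrite mulrC ler_pdivrMr ?mulr_gt0//; nra.
  have : ((4 * eps)^-1 * Ep <= 3 / 4 * eps)%R.
    by rewrite mulrC ler_pdivrMr ?mulr_gt0//; nra.
  rewrite /K; lra.
have mD2 : measurable_fun setT (fun pi => D pi ^+ 2)%R.
  by apply/measurable_funX/measurable_funB; exact: measurable_mean_reward.
have mcD2 : measurable_fun setT (fun pi => (4 * eps)^-1 * D pi ^+ 2)%R.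
  exact: measurable_funM.
have mgap : measurable_fun setT (fun pi => opt_reward M0 - mean_reward M0 pi)%R.
  by apply: measurable_funB => //; exact: measurable_mean_reward.
have gap0 pi : (0 <= opt_reward M0 - mean_reward M0 pi)%R.
  by rewrite subr_ge0 mean_reward_le_opt.
under eq_integral do rewrite gME//.
under [X in _ <= X + _]eq_integral do rewrite gME//.
apply: le_trans (_ : \int[p]_pi (opt_reward M0 - mean_reward M0 pi +
                                 (K + (4 * eps)^-1 * D pi ^+ 2))%:E <= _).
  apply: le_ge0_integral => pi; rewrite lee_fin ?subr_ge0 ?mean_reward_le_opt//.
  have := regret_transfer (mean_reward Mbar pi) (mean_reward M0 pi) eps0 Ha
    (mean_reward_le_opt HM0 a).
  by rewrite -/(D a) -/(D pi) -/K addrA.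
rewrite [leLHS]ge0_integralD_EFin//; last 2 first.
- by apply: measurable_funD => //; exact: measurable_funM.
- by move=> pi; rewrite addr_ge0// mulr_ge0// sqr_ge0.
rewrite [X in _ + X <= _]ge0_integralD_EFin//; last by move=> pi; rewrite mulr_ge0// sqr_ge0.
rewrite ge0_integralZl_EFinM//; last by move=> pi; rewrite sqr_ge0.
rewrite integral_cst//= probability_setT mule1 leeD2l//.
by rewrite -(fineK_integral_unit_bounded (probability_setT p) D2_01) -EFinM -EFinD lee_fin.
Qed.

Lemma sqr_bounds_of_mix3 (q : probability Pi R) :
  \int[mix3 q p \d_a]_pi hellinger2 (M0 pi) (Mbar pi) <= (eps ^+ 2)%:E ->
  (D a ^+ 2 <= 3 * eps ^+ 2)%R /\ \int[p]_pi (D pi ^+ 2)%:E <= (3 * eps ^+ 2)%:E.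
Proof.
have D20 pi : 0 <= (D pi ^+ 2)%:E by rewrite lee_fin sqr_ge0.
have mD2 : measurable_fun setT (fun pi => (D pi ^+ 2)%:E).
  by apply/measurable_EFinP/measurable_funX/measurable_funB; exact: measurable_mean_reward.
move=> /(le_trans (le_ge0_integral _ D20 (sqr_mean_reward_diff_le_hellinger2 M0 Mbar))).
rewrite ge0_integral_mix3// integral_dirac// diracE in_setT mul1e.
have /andP[+ _] := integral_unit_bounded (probability_setT p) D2_01.
have /andP[+ _] := integral_unit_bounded (probability_setT q) D2_01.
rewrite -(fineK_integral_unit_bounded (probability_setT p) D2_01).
rewrite -(fineK_integral_unit_bounded (probability_setT q) D2_01).
rewrite -!EFinD -EFinM !lee_fin.
have := sqr_ge0 (D a); lra.
Qed.

End comparison.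

Section dec_inner.
Context {R : realType} {dP dO : measure_display}
  {Pi : measurableType dP} {O : measurableType dO}.
Local Notation model := (@model R dP dO Pi O).
Variables (Mc : set model) (Mbar : model) (e : R) (p q : probability Pi R).

Lemma dec_inner_le (X : \bar R) : 0 <= X ->
  (forall M, Mc M -> \int[q]_pi hellinger2 (M pi) (Mbar pi) <= (e ^+ 2)%:E ->
     \int[p]_pi gM M pi <= X) ->
  dec_inner Mc Mbar e p q <= X.
Proof.
move=> X0 HX; rewrite /dec_inner; case: pselect => // S0.
by apply: ge_ereal_sup => _ [M HM [HMq ->]]; exact: HX.
Qed.

Lemma le_dec_inner M : Mc M ->
  \int[q]_pi hellinger2 (M pi) (Mbar pi) <= (e ^+ 2)%:E ->
  \int[p]_pi gM M pi <= dec_inner Mc Mbar e p q.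
Proof.
move=> HM HMq; rewrite /dec_inner; case: pselect => [S0|S0].
  by have : set0 (\int[p]_pi gM M pi) by rewrite -S0; exists M.
by apply: ereal_sup_ubound; exists M.
Qed.

Lemma dec_inner_ge0 : (forall M, Mc M -> is_model M) -> 0 <= dec_inner Mc Mbar e p q.
Proof.
move=> HMc; rewrite /dec_inner; case: pselect => // S0.
have /eqP/set0P[v Sv] := S0.
apply: le_trans (ereal_sup_ubound Sv); case: Sv => M /HMc HM [_ ->].
by apply: integral_ge0 => pi _; rewrite gME// lee_fin subr_ge0 mean_reward_le_opt.
Qed.

End dec_inner.

Section add_reference.
Context {R : realType} {dP dO : measure_display}
  {Pi : measurableType dP} {O : measurableType dO}.
Local Notation model := (@model R dP dO Pi O).
Variables (Mc : set model) (Mbar : model).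
Hypotheses (HMc : forall M, Mc M -> is_model M) (HMbar : is_model Mbar).
Variables (eps : R) (eps0 : (0 < eps)%R) (p q : probability Pi R) (a : Pi).
Hypothesis Ha : (opt_reward Mbar <= mean_reward Mbar a + eps / 2)%R.

Local Notation q' := (mix3 q p \d_a).

Lemma le_dec_inner_mix3 M : Mc M ->
  \int[q']_pi hellinger2 (M pi) (Mbar pi) <= (eps ^+ 2)%:E ->
  \int[p]_pi gM M pi <= dec_inner Mc Mbar (Num.sqrt 3 * eps) p q.
Proof.
move=> HM HMq'; apply: le_dec_inner => //.
apply: le_trans (integral_le_mix3 _ p \d_a (fun pi => hellinger2_ge0 _ _)) _.
by rewrite exprMn sqr_sqrtr// EFinM lee_wpmul2l.
Qed.

Lemma exists_dec_inner_add_reference_le : exists p' : probability Pi R,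
  dec_inner (Mc `|` [set Mbar]) Mbar eps p' q' <=
  dec_inner Mc Mbar (Num.sqrt 3 * eps) p q + (4 * eps)%:E.
Proof.
set X := dec_inner Mc Mbar _ p q.
have eps4 : 0 <= (4 * eps)%:E by rewrite lee_fin mulr_ge0// ltW.
have X4 : 0 <= X + (4 * eps)%:E by rewrite adde_ge0 ?dec_inner_ge0.
have [[M0 [HM0 HM0q']]|infeasible] := pselect (exists M0, Mc M0 /\
    \int[q']_pi hellinger2 (M0 pi) (Mbar pi) <= (eps ^+ 2)%:E).
- exists p; apply: dec_inner_le => // M [HM|->] HMq'.
    by apply: le_trans (le_dec_inner_mix3 HM HMq') _; rewrite leeDl.
  have [Da Dp] := sqr_bounds_of_mix3 HM0q'.
  apply: le_trans (integral_gM_le_of_sqr_bounds HMbar (HMc HM0) eps0 Ha Da Dp) _.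
  by rewrite leeD2r// le_dec_inner_mix3.
- exists \d_a; apply: dec_inner_le => // M [HM|->] HMq'.
    by exfalso; apply: infeasible; exists M.
  under eq_integral do rewrite gME//.
  rewrite integral_dirac ?diracE ?in_setT ?mul1e//; last first.
    by apply/measurable_EFinP/measurable_funB => //; exact: measurable_mean_reward.
  apply: le_trans (_ : (4 * eps)%:E <= _); last by rewrite leeDr ?dec_inner_ge0.
  have := eps0; have := Ha; rewrite lee_fin; lra.
Qed.

End add_reference.

Theorem proposition4p10 (R : realType) (dP dO : measure_display)
  (Pi : measurableType dP) (O : measurableType dO)
  (Mc : set (@model R dP dO Pi O)) (Mbar : @model R dP dO Pi O) (eps : R) :
  (forall M, Mc M -> is_model M) -> is_model Mbar -> (0 < eps)%R ->
  dec_c_pac eps (Mc `|` [set Mbar]) Mbar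
    <= dec_c_pac (Num.sqrt 3 * eps) Mc Mbar + (4 * eps)%:E.
Proof.
move=> HMc HMbar eps0.
rewrite -leeBlDr//; apply/ereal_infP => _ [p [q ->]]; rewrite leeBlDr//.
have [pi0] := probability_inhabited p.
have [a Ha] := exists_near_optimal HMbar pi0 (divr_gt0 eps0 (ltr0Sn _ 1)).
have [p' Hp'] := exists_dec_inner_add_reference_le HMc HMbar eps0 p q Ha.
by apply: le_trans Hp'; apply: ereal_inf_lbound; exists p', (mix3 q p \d_a).
Qed.
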